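(* Let $[t_0,t_1]$ be an admissible segment of $\mathbf r$. For $t\in(t_0,t_1]$ let $\mathbf r_0\,\mathbf r_1(t)\,\mathbf r_2(t)\,\mathbf r_3(t)$ be the associated tetrahedron of the sub-segment $[t_0,t]$. Then the edge lengths $\|\mathbf r_0\mathbf r_1(t)\|$, $\|\mathbf r_1(t)\mathbf r_2(t)\|$, $\|\mathbf r_2(t)\mathbf r_3(t)\|$ all tend to $0$ as $t\to t_0^+$ (equivalently, as the arc length of $\mathbf r|_{[t_0,t]}$ tends to $0$).
   Context: Setting: $\mathbf r(t)=(x(t),y(t),z(t))$ with $x,y,z$ rational functions with real coefficients whose denominators do not vanish on the parameter interval, properly parametrized, and not contained in a plane. Curvature $\kappa=\|\mathbf r'\times\mathbf r''\|/\|\mathbf r'\|^3$; torsion $\tau$ vanishes exactly where $\det(\mathbf r',\mathbf r'',\mathbf r''')=0$. Unit tangent $\boldsymbol\alpha=\mathbf r'/\|\mathbf r'\|$, unit binormal $\boldsymbol\gamma=\mathbf r'\times\mathbf r''/\|\mathbf r'\times\mathbf r''\|$; one-sided limits $\boldsymbol\alpha^{\pm}(s)=\lim_{t\to s^\pm}\boldsymbol\alpha(t)$, $\boldsymbol\gamma^{\pm}(s)=\lim_{t\to s^\pm}\boldsymbol\gamma(t)$; tangent lines $T^{\pm}(s)=\{\mathbf r(s)+\lambda\boldsymbol\alpha^{\pm}(s)\}$, osculating planes $O^{\pm}(s)=\{X:(X-\mathbf r(s))\cdot\boldsymbol\gamma^{\pm}(s)=0\}$. A point is singular if it corresponds to more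 than one parameter counted with multiplicity; character points are singular points, inflections ($\kappa=0$) and torsion-vanishing points ($\tau=0$). Associated tetrahedron of $[a,b]$: vertices $\mathbf r(a)$, $T^+(a)\cap L$, $T^-(b)\cap L$, $\mathbf r(b)$ where $L=O^+(a)\cap O^-(b)$. Admissible segment: $t_0<t_1$, no parameter in $(t_0,t_1]$ gives a character point, and for all $t_0\le s_1<s_2\le t_1$: (I) $\boldsymbol\alpha^+(s_1)\cdot\boldsymbol\gamma^-(s_2)\ne0$ and $\boldsymbol\alpha^-(s_2)\cdot\boldsymbol\gamma^+(s_1)\ne0$; (II) $(\boldsymbol\alpha^+(s_1)\times(\mathbf r(s_2)-\mathbf r(s_1)))\cdot\boldsymbol\alpha^-(s_2)\ne0$; (III) $(\mathbf r(s_1)-\mathbf r(s_2))\cdot\boldsymbol\gamma^-(s_2)\ne0$ and $(\mathbf r(s_2)-\mathbf r(s_1))\cdot\boldsymbol\gamma^+(s_1)\ne0$; and (IV) for all $t_0\le s_1<s_2<s_3\le t_1$, $\det(\boldsymbol\alpha(s_1),\boldsymbol\alpha(s_2),\boldsymbol\alpha(s_3))\ne0$ (one-sided limits used at $t_0,t_1$). *)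

From Stdlib Require Import Reals List ClassicalEpsilon.
Open Scope R_scope.

Definition V3 := (R * R * R)%type.
Definition vx (v : V3) : R := fst (fst v).
Definition vy (v : V3) : R := snd (fst v).
Definition vz (v : V3) : R := snd v.
Definition vzero : V3 := (0, 0, 0).
Definition vadd (u v : V3) : V3 := (vx u + vx v, vy u + vy v, vz u + vz v).
Definition vsub (u v : V3) : V3 := (vx u - vx v, vy u - vy v, vz u - vz v).
Definition vscale (a : R) (v : V3) : V3 := (a * vx v, a * vy v, a * vz v).
Definition dot (u v : V3) : R := vx u * vx v + vy u * vy v + vz u * vz v.
Definition cross (u v : V3) : V3 :=
  (vy u * vz v - vz u * vy v, vz u * vx v - vx u * vz v, vx u * vy v - vy u * vx v).
Definition vnorm (v : V3) : R := sqrt (dot v v).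
Definition det3 (a b c : V3) : R := dot a (cross b c).
Definition vdist (P Q : V3) : R := vnorm (vsub P Q).

(** * Real polynomials (coefficient lists, constant term first) *)
Fixpoint peval (p : list R) (x : R) : R :=
  match p with nil => 0 | a :: q => a + x * peval q x end.
Fixpoint padd (p q : list R) : list R :=
  match p, q with
  | nil, _ => q
  | _, nil => p
  | a :: p', b :: q' => (a + b) :: padd p' q'
  end.
Fixpoint pmul (p q : list R) : list R :=
  match p with nil => nil | a :: p' => padd (map (Rmult a) q) (0 :: pmul p' q) end.
Definition popp (p : list R) : list R := map Ropp p.
Fixpoint pderiv_aux (n : nat) (p : list R) : list R :=
  match p with nil => nil | a :: q => (INR n * a) :: pderiv_aux (S n) q end.
Definition pderiv (p : list R) : list R :=
  match p with nil => nil | _ :: q => pderiv_aux 1 q end.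

Record ratfun := { num : list R ; den : list R }.
Definition reval (f : ratfun) (t : R) : R := peval (num f) t / peval (den f) t.
(** derivative of a rational function (quotient rule) *)
Definition rderiv (f : ratfun) : ratfun :=
  {| num := padd (pmul (pderiv (num f)) (den f)) (popp (pmul (num f) (pderiv (den f))));
     den := pmul (den f) (den f) |}.

Record rcurve := { cx : ratfun ; cy : ratfun ; cz : ratfun }.
Definition cderiv (c : rcurve) : rcurve :=
  {| cx := rderiv (cx c); cy := rderiv (cy c); cz := rderiv (cz c) |}.
Definition pt (c : rcurve) (t : R) : V3 := (reval (cx c) t, reval (cy c) t, reval (cz c) t).
Definition d1 (c : rcurve) (t : R) : V3 := pt (cderiv c) t.
Definition d2 (c : rcurve) (t : R) : V3 := pt (cderiv (cderiv c)) t.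
Definition d3 (c : rcurve) (t : R) : V3 := pt (cderiv (cderiv (cderiv c))) t.

Definition is_interval (I : R -> Prop) : Prop :=
  forall x y z, I x -> I z -> x <= y <= z -> I y.
Definition denoms_nonzero (c : rcurve) (I : R -> Prop) : Prop :=
  forall t, I t -> peval (den (cx c)) t <> 0 /\ peval (den (cy c)) t <> 0
                   /\ peval (den (cz c)) t <> 0.
Definition proper_param (c : rcurve) (I : R -> Prop) : Prop :=
  exists E : list R, forall s t, I s -> I t -> ~ In s E -> ~ In t E ->
    pt c s = pt c t -> s = t.
Definition contained_in_plane (c : rcurve) (I : R -> Prop) : Prop :=
  exists (n : V3) (d : R), n <> vzero /\ forall t, I t -> dot n (pt c t) = d.

Definition curvature (c : rcurve) (t : R) : R :=
  vnorm (cross (d1 c t) (d2 c t)) / (vnorm (d1 c t)) ^ 3.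
Definition alpha (c : rcurve) (t : R) : V3 := vscale (/ vnorm (d1 c t)) (d1 c t).
Definition gamma (c : rcurve) (t : R) : V3 :=
  vscale (/ vnorm (cross (d1 c t) (d2 c t))) (cross (d1 c t) (d2 c t)).

Definition rlim (f : R -> V3) (s : R) (L : V3) : Prop :=
  forall eps, 0 < eps -> exists delta, 0 < delta /\
    forall t, s < t < s + delta -> vnorm (vsub (f t) L) < eps.
Definition llim (f : R -> V3) (s : R) (L : V3) : Prop :=
  forall eps, 0 < eps -> exists delta, 0 < delta /\
    forall t, s - delta < t < s -> vnorm (vsub (f t) L) < eps.
Definition inhV3 : inhabited V3 := inhabits vzero.
Definition alpha_p (c : rcurve) (s : R) : V3 := epsilon inhV3 (rlim (alpha c) s).
Definition alpha_m (c : rcurve) (s : R) : V3 := epsilon inhV3 (llim (alpha c) s).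
Definition gamma_p (c : rcurve) (s : R) : V3 := epsilon inhV3 (rlim (gamma c) s).
Definition gamma_m (c : rcurve) (s : R) : V3 := epsilon inhV3 (llim (gamma c) s).

Definition on_line (P u X : V3) : Prop := exists lambda, X = vadd P (vscale lambda u).
Definition on_plane (P n X : V3) : Prop := dot (vsub X P) n = 0.

(** * Associated tetrahedron of [a,b]: r(a), T+(a) ∩ L, T-(b) ∩ L, r(b),
      with L = O+(a) ∩ O-(b) *)
Definition in_L (c : rcurve) (a b : R) (X : V3) : Prop :=
  on_plane (pt c a) (gamma_p c a) X /\ on_plane (pt c b) (gamma_m c b) X.
Definition tet_v0 (c : rcurve) (a b : R) : V3 := pt c a.
Definition tet_v1 (c : rcurve) (a b : R) : V3 :=
  epsilon inhV3 (fun X => on_line (pt c a) (alpha_p c a) X /\ in_L c a b X).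
Definition tet_v2 (c : rcurve) (a b : R) : V3 :=
  epsilon inhV3 (fun X => on_line (pt c b) (alpha_m c b) X /\ in_L c a b X).
Definition tet_v3 (c : rcurve) (a b : R) : V3 := pt c b.

(** singular: r(t) corresponds to more than one parameter (with multiplicity) *)
Definition singular_param (c : rcurve) (I : R -> Prop) (t : R) : Prop :=
  (exists s, I s /\ s <> t /\ pt c s = pt c t) \/ d1 c t = vzero.
Definition inflection (c : rcurve) (t : R) : Prop := curvature c t = 0.
Definition torsion_zero (c : rcurve) (t : R) : Prop := det3 (d1 c t) (d2 c t) (d3 c t) = 0.
Definition character_point (c : rcurve) (I : R -> Prop) (t : R) : Prop :=
  singular_param c I t \/ inflection c t \/ torsion_zero c t.

Definition alpha_seg (c : rcurve) (t0 t1 s : R) : V3 :=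
  if Req_EM_T s t0 then alpha_p c t0
  else if Req_EM_T s t1 then alpha_m c t1 else alpha c s.

Definition admissible (c : rcurve) (I : R -> Prop) (t0 t1 : R) : Prop :=
  t0 < t1 /\
  (forall t, t0 < t <= t1 -> ~ character_point c I t) /\
  (forall s1 s2, t0 <= s1 -> s1 < s2 -> s2 <= t1 ->
     (dot (alpha_p c s1) (gamma_m c s2) <> 0 /\ dot (alpha_m c s2) (gamma_p c s1) <> 0) /\
     dot (cross (alpha_p c s1) (vsub (pt c s2) (pt c s1))) (alpha_m c s2) <> 0 /\
     (dot (vsub (pt c s1) (pt c s2)) (gamma_m c s2) <> 0 /\
      dot (vsub (pt c s2) (pt c s1)) (gamma_p c s1) <> 0)) /\
  (forall s1 s2 s3, t0 <= s1 -> s1 < s2 -> s2 < s3 -> s3 <= t1 ->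
     det3 (alpha_seg c t0 t1 s1) (alpha_seg c t0 t1 s2) (alpha_seg c t0 t1 s3) <> 0).

From Pilot Require Import Defs.
From Stdlib Require Import Reals List ClassicalEpsilon.
From Stdlib Require Import Lra Lia Classical Factorial FunctionalExtensionality PropExtensionality.
Open Scope R_scope.

(** Only two features of an admissible segment are used: the curve is regular
    ([r' <> 0], [r' x r'' <> 0]) on [(t0, t1]] and its torsion does not vanish on
    [(t0, t1)].  The proof is a local expansion of the curve at [t0].

    - Since the coordinates are rational, a component [n . (r - r(t0))] that is
      flat at [t0] vanishes identically; nonvanishing torsion then forbids it.
      Hence there are adapted orders [m1 < m2 < m3]: the first derivatives of
      [r] at [t0] that are nonzero, non-collinear, non-coplanar.
    - In the frame [e1, e2, e3] of these derivatives the coordinates [X, Y, Z]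
      of [r - r(t0)] vanish at [t0] to orders [m1, m2, m3].  By a Taylor
      argument (mean value theorem), each coordinate and its derivatives,
      rescaled by powers of [h = t - t0], have explicit limits.
    - These limits give [alpha+(t0)] and [gamma+(t0)], and closed formulas for
      the offsets of the two inner vertices from [r(t0)] and [r(t)]; the offsets
      are [O(h^m1)] times a bounded factor and [O(h)] times [|r'|], so they
      vanish, and the three edges are bounded by them and by [|r(t) - r(t0)|]. *)

(** * Calculus of polynomials and rational functions *)

Lemma peval_padd p q x : peval (padd p q) x = peval p x + peval q x.
Proof.
  revert q; induction p as [|a p IH]; intros [|b q]; simpl; try ring.
  rewrite IH; ring.
Qed.

Lemma peval_scale a q x : peval (map (Rmult a) q) x = a * peval q x.
Proof. induction q as [|b q IH]; simpl; [ring | rewrite IH; ring]. Qed.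

Lemma peval_pmul p q x : peval (pmul p q) x = peval p x * peval q x.
Proof.
  induction p as [|a p IH]; simpl; [ring|].
  rewrite peval_padd, peval_scale; simpl; rewrite IH; ring.
Qed.

Lemma peval_popp p x : peval (popp p) x = - peval p x.
Proof. unfold popp; induction p as [|a p IH]; simpl; [ring | rewrite IH; ring]. Qed.

Lemma peval_pderiv_aux_S n q x :
  peval (pderiv_aux (S n) q) x = peval (pderiv_aux n q) x + peval q x.
Proof.
  revert n; induction q as [|b q IH]; intros n; cbn [pderiv_aux peval]; [ring|].
  rewrite IH, (S_INR n). ring.
Qed.

Lemma peval_pderiv_aux_0 q x : peval (pderiv_aux 0 q) x = x * peval (pderiv q) x.
Proof. destruct q; simpl; ring. Qed.

Lemma derivable_pt_lim_eq f x l1 l2 :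
  derivable_pt_lim f x l1 -> l1 = l2 -> derivable_pt_lim f x l2.
Proof. intros H ->; exact H. Qed.

Lemma derivable_pt_lim_ext f g x l :
  (forall y, f y = g y) -> derivable_pt_lim f x l -> derivable_pt_lim g x l.
Proof.
  intros E H eps Heps. destruct (H eps Heps) as [d Hd]. exists d.
  intros h Hh Hd'. rewrite <- !E. apply Hd; auto.
Qed.

Lemma peval_deriv p x : derivable_pt_lim (peval p) x (peval (pderiv p) x).
Proof.
  induction p as [|a q IH].
  - apply (derivable_pt_lim_ext (fun _ => 0)); [reflexivity | apply derivable_pt_lim_const].
  - apply (derivable_pt_lim_ext (fun y => a + y * peval q y)); [reflexivity|].
    eapply derivable_pt_lim_eq.
    + apply (derivable_pt_lim_plus (fun _ => a) (fun y => y * peval q y));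
        [apply derivable_pt_lim_const|].
      apply (derivable_pt_lim_mult (fun y => y) (peval q)); [apply derivable_pt_lim_id | exact IH].
    + simpl. rewrite peval_pderiv_aux_S, peval_pderiv_aux_0. ring.
Qed.

Lemma pderiv_length p : length (pderiv p) = pred (length p).
Proof.
  destruct p as [|a q]; simpl; auto.
  generalize 1%nat; induction q; intros; simpl; auto.
Qed.

Lemma reval_deriv f t : peval (den f) t <> 0 ->
  derivable_pt_lim (reval f) t (reval (rderiv f) t).
Proof.
  intros H.
  apply (derivable_pt_lim_ext (fun y => peval (Defs.num f) y / peval (den f) y)); [reflexivity|].
  eapply derivable_pt_lim_eq.
  - apply derivable_pt_lim_div; auto; apply peval_deriv.
  - unfold reval; simpl. rewrite peval_padd, peval_popp, !peval_pmul.
    unfold Rsqr. field. auto.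
Qed.

Fixpoint riter (k : nat) (f : ratfun) : ratfun :=
  match k with O => f | S k => rderiv (riter k f) end.

Lemma riter_den_nz k f t : peval (den f) t <> 0 -> peval (den (riter k f)) t <> 0.
Proof.
  intros H; induction k; simpl; auto.
  rewrite peval_pmul. apply Rmult_integral_contrapositive; auto.
Qed.

Definition deriv_chain (F : nat -> R -> R) (lo hi : R) : Prop :=
  forall k t, lo <= t <= hi -> derivable_pt_lim (F k) t (F (S k) t).

Definition ratfun_chain (f : ratfun) (k : nat) (t : R) : R := reval (riter k f) t.

Lemma ratfun_chain_ok f lo hi :
  (forall t, lo <= t <= hi -> peval (den f) t <> 0) -> deriv_chain (ratfun_chain f) lo hi.
Proof. intros H k t Ht. apply reval_deriv, riter_den_nz; auto. Qed.

Definition shift0 (F : nat -> R -> R) (C : R) (k : nat) (t : R) : R :=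
  match k with O => F O t - C | S _ => F k t end.

Lemma shift0_chain F C lo hi : deriv_chain F lo hi -> deriv_chain (shift0 F C) lo hi.
Proof.
  intros H [|k] t Ht; simpl; [|apply H; auto].
  eapply derivable_pt_lim_eq.
  - apply (derivable_pt_lim_minus (F O) (fun _ => C)); [apply H; auto | apply derivable_pt_lim_const].
  - ring.
Qed.

Definition lin3 (a1 a2 a3 : R) (F1 F2 F3 : nat -> R -> R) (k : nat) (t : R) : R :=
  a1 * F1 k t + a2 * F2 k t + a3 * F3 k t.

Lemma lin3_chain a1 a2 a3 F1 F2 F3 lo hi :
  deriv_chain F1 lo hi -> deriv_chain F2 lo hi -> deriv_chain F3 lo hi ->
  deriv_chain (lin3 a1 a2 a3 F1 F2 F3) lo hi.
Proof.
  intros H1 H2 H3 k t Ht. unfold lin3.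
  apply derivable_pt_lim_plus; [apply derivable_pt_lim_plus|];
    apply derivable_pt_lim_scal; auto.
Qed.

Lemma chain_shift F lo hi j : deriv_chain F lo hi -> deriv_chain (fun k => F (j + k)%nat) lo hi.
Proof. intros H k t Ht. replace (j + S k)%nat with (S (j + k)) by lia. apply H; auto. Qed.

Lemma chain_opp G lo hi : deriv_chain G lo hi -> deriv_chain (fun k t => - G k t) lo hi.
Proof. intros H k t Ht. apply derivable_pt_lim_opp, H; auto. Qed.

Lemma chain_cont F lo hi k t : deriv_chain F lo hi -> lo <= t <= hi -> continuity_pt (F k) t.
Proof.
  intros H Ht. apply derivable_continuous_pt. exists (F (S k) t). apply H; auto.
Qed.

Definition tends0 (f : R -> R) (L : R) : Prop := limit1_in f (fun h => 0 < h) L 0.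

Lemma tends0_def f L : tends0 f L <-> forall eps, 0 < eps -> exists d, 0 < d /\
   forall h, 0 < h < d -> Rabs (f h - L) < eps.
Proof.
  unfold tends0, limit1_in, limit_in; simpl; unfold Rdist. split.
  - intros H eps He. destruct (H eps He) as [d [Hd H']]. exists d; split; auto.
    intros h Hh. apply H'. rewrite Rminus_0_r, Rabs_right; lra.
  - intros H eps He. destruct (H eps He) as [d [Hd H']]. exists d; split; auto.
    intros h [Hh1 Hh2]. apply H'. rewrite Rminus_0_r, Rabs_right in Hh2; lra.
Qed.

Lemma tends0_ext_loc f g L : (exists d, 0 < d /\ forall h, 0 < h < d -> f h = g h) ->
  tends0 f L -> tends0 g L.
Proof.
  intros [d [Hd E]] H. rewrite tends0_def in *. intros eps He.
  destruct (H eps He) as [d' [Hd' H']]. exists (Rmin d d'). split; [apply Rmin_pos; auto|].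
  intros h Hh. pose proof (Rmin_r d d'); pose proof (Rmin_l d d').
  rewrite <- E; [apply H'|]; lra.
Qed.

Lemma tends0_ext f g L : (forall h, 0 < h -> f h = g h) -> tends0 f L -> tends0 g L.
Proof. intros E. apply tends0_ext_loc. exists 1; split; [lra|]. intros h Hh; apply E; lra. Qed.

Lemma tends0_eq f a b : tends0 f a -> a = b -> tends0 f b.
Proof. intros H ->; auto. Qed.

Lemma tends0_const c : tends0 (fun _ => c) c.
Proof. exact (limit_free (fun _ => c) _ 0 0). Qed.

Lemma tends0_id : tends0 (fun h => h) 0.
Proof. apply lim_x. Qed.

Lemma tends0_plus f g a b : tends0 f a -> tends0 g b -> tends0 (fun h => f h + g h) (a + b).
Proof. apply limit_plus. Qed.
Lemma tends0_minus f g a b : tends0 f a -> tends0 g b -> tends0 (fun h => f h - g h) (a - b).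
Proof. apply limit_minus. Qed.
Lemma tends0_mult f g a b : tends0 f a -> tends0 g b -> tends0 (fun h => f h * g h) (a * b).
Proof. apply limit_mul. Qed.
Lemma tends0_inv f a : tends0 f a -> a <> 0 -> tends0 (fun h => / f h) (/ a).
Proof. apply limit_inv. Qed.
Lemma tends0_div f g a b : tends0 f a -> tends0 g b -> b <> 0 -> tends0 (fun h => f h / g h) (a / b).
Proof. intros. apply tends0_mult, tends0_inv; auto. Qed.

Lemma tends0_comp_cont f g L : tends0 f L -> continuity_pt g L -> tends0 (fun h => g (f h)) (g L).
Proof.
  intros H Hg. rewrite tends0_def in *. intros eps He.
  destruct (Hg eps He) as [d [Hd H']]. simpl in H'; unfold Rdist in H'.
  destruct (H d Hd) as [d2 [Hd2 H2]]. exists d2; split; auto. intros h Hh.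
  destruct (Req_dec (f h) L) as [E|E].
  - rewrite E, Rminus_diag, Rabs_R0; lra.
  - apply H'. split; [split; [exact I | auto] | apply H2; auto].
Qed.

Lemma tends0_abs f L : tends0 f L -> tends0 (fun h => Rabs (f h)) (Rabs L).
Proof. intros H. apply tends0_comp_cont; [exact H | apply Rcontinuity_abs]. Qed.

Lemma tends0_pow n : (0 < n)%nat -> tends0 (fun h => h ^ n) 0.
Proof.
  intros Hn. eapply tends0_eq.
  - apply (tends0_comp_cont (fun h => h) (fun x => x ^ n) 0 tends0_id).
    apply derivable_continuous_pt, derivable_pt_pow.
  - apply pow_i; lia.
Qed.

Lemma tends0_pow_ratio a b : (a < b)%nat -> tends0 (fun h => h ^ b / h ^ a) 0.
Proof.
  intros H. apply (tends0_ext (fun h => h ^ (b - a))); [|apply tends0_pow; lia].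
  intros h Hh. assert (E : h ^ b = h ^ (b - a) * h ^ a) by (rewrite <- pow_add; f_equal; lia).
  rewrite E. field. apply pow_nonzero; lra.
Qed.

Lemma tends0_cont g t0 : continuity_pt g t0 -> tends0 (fun h => g (t0 + h)) (g t0).
Proof.
  intros H. rewrite tends0_def. intros eps He.
  destruct (H eps He) as [d [Hd H']]. exists d; split; auto. intros h Hh.
  simpl in H'; unfold Rdist in H'. apply H'. split; [split; [exact I | lra]|].
  replace (t0 + h - t0) with h by ring. rewrite Rabs_right; lra.
Qed.

Lemma tends0_cont_left g s : continuity_pt g s -> tends0 (fun h => g (s - h)) (g s).
Proof.
  intros H. rewrite tends0_def. intros eps He.
  destruct (H eps He) as [d [Hd H']]. exists d; split; auto. intros h Hh.
  simpl in H'; unfold Rdist in H'. apply H'. split; [split; [exact I | lra]|].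
  replace (s - h - s) with (- h) by ring. rewrite Rabs_Ropp, Rabs_right; lra.
Qed.

Lemma tends0_unique f a b : tends0 f a -> tends0 f b -> a = b.
Proof.
  intros. eapply single_limit; eauto. intros alp Ha. exists (alp / 2). split; [lra|].
  unfold Rdist. rewrite Rminus_0_r, Rabs_right; lra.
Qed.

Lemma tends0_eventually_pos f a : tends0 f a -> 0 < a ->
  exists d, 0 < d /\ forall h, 0 < h < d -> 0 < f h.
Proof.
  intros H Ha. rewrite tends0_def in H. destruct (H a Ha) as [d [Hd H']].
  exists d; split; auto. intros h Hh. specialize (H' h Hh). apply Rabs_def2 in H'. lra.
Qed.

(** * Taylor asymptotics along a derivative chain

    If [G 0, ..., G (n-1)] vanish at [t0] then [G 0 (t0 + h) / h ^ n] tends to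
    [G n t0 / n!]; this is proved by induction on [n] with the mean value theorem. *)

Lemma mvt_power_bound G t0 t1 n K h : deriv_chain G t0 t1 -> G 0%nat t0 = 0 ->
  0 < h -> t0 + h <= t1 ->
  (forall s, 0 < s < h -> G 1%nat (t0 + s) < K * s ^ n) ->
  G 0%nat (t0 + h) < K * h ^ (S n) / INR (S n).
Proof.
  intros HC H0 Hh Hh1 Hs.
  assert (HS : INR (S n) <> 0) by (apply not_0_INR; lia).
  pose (phi := fun s => G 0%nat (t0 + s) - (K / INR (S n)) * s ^ (S n)).
  pose (phi' := fun s => G 1%nat (t0 + s) - K * s ^ n).
  destruct (MVT_cor2 phi phi' 0 h Hh) as [c [Ec Hc]].
  - intros c Hc. unfold phi, phi'. eapply derivable_pt_lim_eq.
    + apply derivable_pt_lim_minus.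
      * apply (derivable_pt_lim_comp (fun s => t0 + s) (G 0%nat)).
        -- apply (derivable_pt_lim_plus (fun _ => t0) (fun s => s));
             [apply derivable_pt_lim_const | apply derivable_pt_lim_id].
        -- apply HC. lra.
      * apply (derivable_pt_lim_scal (fun s => s ^ S n)), derivable_pt_lim_pow.
    + simpl pred. field. auto.
  - unfold phi, phi' in Ec. rewrite Rplus_0_r, H0 in Ec.
    specialize (Hs c Hc). simpl (0 ^ S n) in Ec.
    assert (G 0%nat (t0 + h) - K / INR (S n) * h ^ S n < 0) by nra.
    unfold Rdiv in *. lra.
Qed.

Lemma taylor_step G t0 t1 n L eps h : deriv_chain G t0 t1 -> G 0%nat t0 = 0 ->
  0 < eps -> 0 < h -> t0 + h <= t1 ->
  (forall s, 0 < s < h -> Rabs (G 1%nat (t0 + s) / s ^ n - L) < eps) ->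
  Rabs (G 0%nat (t0 + h) / h ^ S n - L / INR (S n)) < eps.
Proof.
  intros HC H0 He Hh Hh1 Hs.
  assert (HN : 1 <= INR (S n)) by (rewrite S_INR; pose proof (pos_INR n); lra).
  assert (HH : 0 < h ^ S n) by (apply pow_lt; lra).
  assert (Up : G 0%nat (t0 + h) < (L + eps) * h ^ S n / INR (S n)).
  { apply (mvt_power_bound G t0 t1); auto. intros s Hs'.
    assert (0 < s ^ n) by (apply pow_lt; lra).
    specialize (Hs s Hs'). apply Rabs_def2 in Hs.
    replace (G 1%nat (t0 + s)) with (G 1%nat (t0 + s) / s ^ n * s ^ n) by (field; lra). nra. }
  assert (Lo : - G 0%nat (t0 + h) < - (L - eps) * h ^ S n / INR (S n)).
  { apply (mvt_power_bound (fun k t => - G k t) t0 t1); auto using chain_opp; [lra|].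
    intros s Hs'. assert (0 < s ^ n) by (apply pow_lt; lra).
    specialize (Hs s Hs'). apply Rabs_def2 in Hs.
    replace (G 1%nat (t0 + s)) with (G 1%nat (t0 + s) / s ^ n * s ^ n) by (field; lra). nra. }
  set (q := G 0%nat (t0 + h) / h ^ S n).
  assert (Eq : G 0%nat (t0 + h) = q * h ^ S n) by (unfold q; field; lra).
  rewrite Eq in Up, Lo.
  assert (q < (L + eps) / INR (S n)).
  { apply (Rmult_lt_reg_r (h ^ S n)); auto. unfold Rdiv in *. lra. }
  assert ((L - eps) / INR (S n) < q).
  { apply (Rmult_lt_reg_r (h ^ S n)); auto. unfold Rdiv in *. lra. }
  assert (eps / INR (S n) <= eps).
  { unfold Rdiv. rewrite <- (Rmult_1_r eps) at 2. apply Rmult_le_compat_l; [lra|].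
    rewrite <- Rinv_1. apply Rinv_le_contravar; lra. }
  apply Rabs_def1; unfold Rdiv in *; lra.
Qed.

Lemma taylor_ratio n : forall G t0 t1, deriv_chain G t0 t1 -> t0 < t1 ->
  (forall j, (j < n)%nat -> G j t0 = 0) ->
  tends0 (fun h => G 0%nat (t0 + h) / h ^ n) (G n t0 / INR (fact n)).
Proof.
  induction n as [|n IH]; intros G t0 t1 HC Ht H0.
  - apply (tends0_ext (fun h => G 0%nat (t0 + h))); [intros; simpl; field|].
    eapply tends0_eq; [apply tends0_cont; eapply chain_cont; eauto; lra | simpl; field].
  - assert (IHn := IH (fun k => G (S k)) t0 t1 (chain_shift G t0 t1 1 HC) Ht
                      (fun j Hj => H0 (S j) ltac:(lia))); cbv beta in IHn.
    replace (G (S n) t0 / INR (fact (S n))) with (G (S n) t0 / INR (fact n) / INR (S n))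
      by (rewrite fact_simpl, mult_INR; field;
          split; [apply not_0_INR, fact_neq_0 | apply not_0_INR; lia]).
    rewrite tends0_def in *. intros eps He.
    destruct (IHn eps He) as [d [Hd Hd']].
    exists (Rmin d (t1 - t0)). split; [apply Rmin_pos; lra|].
    intros h Hh. pose proof (Rmin_l d (t1 - t0)); pose proof (Rmin_r d (t1 - t0)).
    apply (taylor_step G t0 t1); auto; try lra.
    + apply H0; lia.
    + intros s Hs. apply Hd'. lra.
Qed.

(** Limit of [G k (t0 + h) h^k / h^m] when [G] vanishes to order [m]:
    [G m t0 / (m - k)!] if [k <= m], and [0] otherwise. *)
Definition taylor_coef (m k : nat) : R := if Nat.leb k m then / INR (fact (m - k)) else 0.

Lemma scaled_deriv_limit F t0 t1 m k : deriv_chain F t0 t1 -> t0 < t1 ->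
  (forall j, (j < m)%nat -> F j t0 = 0) ->
  tends0 (fun h => F k (t0 + h) * h ^ k / h ^ m) (F m t0 * taylor_coef m k).
Proof.
  intros HC Ht H0. unfold taylor_coef. destruct (Nat.leb_spec k m) as [Hkm|Hkm].
  - pose proof (taylor_ratio (m - k) (fun j => F (k + j)%nat) t0 t1 (chain_shift F t0 t1 k HC) Ht
      (fun j Hj => H0 (k + j)%nat ltac:(lia))) as H.
    cbv beta in H. rewrite Nat.add_0_r in H. replace (k + (m - k))%nat with m in H by lia.
    eapply tends0_eq; [eapply tends0_ext; [|exact H] | unfold Rdiv; ring].
    intros h Hh. assert (E : h ^ m = h ^ (m - k) * h ^ k)
      by (rewrite <- pow_add; f_equal; lia).
    rewrite E. field. split; apply pow_nonzero; lra.
  - apply (tends0_ext (fun h => F k (t0 + h) * h ^ (k - m))).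
    + intros h Hh. assert (E : h ^ k = h ^ (k - m) * h ^ m)
        by (rewrite <- pow_add; f_equal; lia).
      rewrite E. field. apply pow_nonzero; lra.
    + eapply tends0_eq; [apply tends0_mult|].
      * apply tends0_cont. eapply chain_cont; eauto. lra.
      * apply tends0_pow. lia.
      * ring.
Qed.

(** * A polynomial vanishing to infinite order at a point is zero *)

Fixpoint piter (k : nat) (p : list R) : list R :=
  match k with O => p | S k => pderiv (piter k p) end.

Lemma piter_pderiv k p : piter k (pderiv p) = piter (S k) p.
Proof. induction k; simpl; auto. rewrite IHk; auto. Qed.

Lemma deriv_zero_const f f' a b : a <= b ->
  (forall c, a <= c <= b -> derivable_pt_lim f c (f' c)) ->
  (forall c, a <= c <= b -> f' c = 0) -> f b = f a.
Proof.
  intros Hab Hd Hz. destruct (Rle_lt_or_eq_dec _ _ Hab) as [H|H]; [|subst; auto].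
  destruct (MVT_cor2 f f' a b H Hd) as [c [E Hc]]. rewrite Hz in E; lra.
Qed.

Lemma poly_flat_zero t0 n : forall p, (length p <= n)%nat ->
  (forall k, peval (piter k p) t0 = 0) -> forall t, peval p t = 0.
Proof.
  induction n as [|n IH]; intros p Hl H t.
  - destruct p; simpl in *; [auto | lia].
  - assert (Hq : forall t, peval (pderiv p) t = 0).
    { apply IH; [rewrite pderiv_length; lia|]. intros k. rewrite piter_pderiv. apply H. }
    assert (H0 : peval p t0 = 0) by apply (H O).
    destruct (Rle_dec t0 t).
    + rewrite (deriv_zero_const (peval p) (peval (pderiv p)) t0 t); auto using peval_deriv.
    + rewrite <- (deriv_zero_const (peval p) (peval (pderiv p)) t t0); auto using peval_deriv; lra.
Qed.

Lemma poly_zero_of_flat p t0 : (forall m, tends0 (fun h => peval p (t0 + h) / h ^ m) 0) ->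
  forall t, peval p t = 0.
Proof.
  intros H. apply (poly_flat_zero t0 (length p)); auto.
  intros k. induction k as [k IHk] using (well_founded_induction Wf_nat.lt_wf).
  assert (HC : deriv_chain (fun k => peval (piter k p)) t0 (t0 + 1))
    by (intros j t _; apply peval_deriv).
  pose proof (tends0_unique _ _ _ (taylor_ratio k _ t0 (t0 + 1) HC ltac:(lra) IHk) (H k)) as E.
  assert (INR (fact k) <> 0) by (apply not_0_INR, fact_neq_0).
  unfold Rdiv in E. apply Rmult_integral in E. destruct E as [E|E]; auto.
  exfalso. revert E. apply Rinv_neq_0_compat; auto.
Qed.

Ltac vd := repeat match goal with v : V3 |- _ => destruct v as [[? ?] ?] end;
  unfold det3, dot, cross, vsub, vadd, vscale, vx, vy, vz, vzero in *; cbn [fst snd] in *.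

Lemma dot_pos v : v <> vzero -> 0 < dot v v.
Proof.
  intros Hn. destruct v as [[x y] z]. unfold dot, vx, vy, vz; simpl.
  destruct (Req_dec x 0), (Req_dec y 0), (Req_dec z 0); subst;
    try (apply Rlt_le_trans with (x * x); [apply Rsqr_pos_lt; auto | nra]);
    try (apply Rlt_le_trans with (y * y); [apply Rsqr_pos_lt; auto | nra]);
    try (apply Rlt_le_trans with (z * z); [apply Rsqr_pos_lt; auto | nra]).
  exfalso; apply Hn; reflexivity.
Qed.

Lemma vnorm_pos v : v <> vzero -> 0 < vnorm v.
Proof. intros H. apply sqrt_lt_R0, dot_pos; auto. Qed.

Lemma vnorm_scale s v : 0 <= s -> vnorm (vscale s v) = s * vnorm v.
Proof.
  intros Hs. unfold vnorm.
  replace (dot (vscale s v) (vscale s v)) with ((s * s) * dot v v) by (vd; ring).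
  rewrite sqrt_mult_alt, sqrt_square; auto. nra.
Qed.

Lemma vscale_nz s v : s <> 0 -> v <> vzero -> vscale s v <> vzero.
Proof.
  intros Hs Hv E. apply Hv. destruct v as [[x y] z]. vd.
  injection E; intros. f_equal; [f_equal|]; apply (Rmult_eq_reg_l s); auto; lra.
Qed.

Lemma normalize_scale s v : 0 < s -> v <> vzero ->
  vscale (/ vnorm (vscale s v)) (vscale s v) = vscale (/ vnorm v) v.
Proof.
  intros Hs Hv. rewrite vnorm_scale; [|lra]. pose proof (vnorm_pos v Hv).
  vd. f_equal; [f_equal|]; field; split; lra.
Qed.

(** The l1 norm, which dominates the Euclidean norm and is easy to bound. *)
Definition N1 (v : V3) : R := Rabs (vx v) + Rabs (vy v) + Rabs (vz v).

Lemma vnorm_le_N1 v : vnorm v <= N1 v.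
Proof.
  unfold vnorm, N1, dot.
  pose proof (Rabs_pos (vx v)); pose proof (Rabs_pos (vy v)); pose proof (Rabs_pos (vz v)).
  rewrite <- (sqrt_Rsqr (Rabs (vx v) + Rabs (vy v) + Rabs (vz v))) by lra.
  apply sqrt_le_1_alt.
  rewrite (Rsqr_abs (vx v)), (Rsqr_abs (vy v)), (Rsqr_abs (vz v)) at 1.
  unfold Rsqr. nra.
Qed.

Lemma coord_le_vnorm v :
  Rabs (vx v) <= vnorm v /\ Rabs (vy v) <= vnorm v /\ Rabs (vz v) <= vnorm v.
Proof.
  unfold vnorm, dot.
  assert (0 <= vx v * vx v) by nra; assert (0 <= vy v * vy v) by nra;
    assert (0 <= vz v * vz v) by nra.
  repeat split; rewrite <- sqrt_Rsqr_abs; apply sqrt_le_1_alt; unfold Rsqr; lra.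
Qed.

Lemma N1_triang3 a b c : N1 (vsub (vsub a b) c) <= N1 a + N1 b + N1 c.
Proof.
  assert (T : forall x y z, Rabs (x - y - z) <= Rabs x + Rabs y + Rabs z).
  { intros x y z. unfold Rminus. eapply Rle_trans; [apply Rabs_triang|].
    pose proof (Rabs_triang x (- y)). rewrite Rabs_Ropp in *. lra. }
  unfold N1, vsub, vx, vy, vz; cbn [fst snd].
  pose proof (T (fst (fst a)) (fst (fst b)) (fst (fst c))).
  pose proof (T (snd (fst a)) (snd (fst b)) (snd (fst c))).
  pose proof (T (snd a) (snd b) (snd c)). lra.
Qed.

Lemma N1_scale s v : N1 (vscale s v) = Rabs s * N1 v.
Proof. unfold N1, vscale, vx, vy, vz; simpl. rewrite !Rabs_mult. ring. Qed.

Lemma N1_vsub_sym a b : N1 (vsub a b) = N1 (vsub b a).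
Proof.
  unfold N1, vsub, vx, vy, vz; simpl.
  rewrite (Rabs_minus_sym (fst (fst a))), (Rabs_minus_sym (snd (fst a))), (Rabs_minus_sym (snd a)).
  auto.
Qed.

Lemma vscale_vscale a b v : vscale a (vscale b v) = vscale (a * b) v.
Proof. vd. f_equal; [f_equal|]; ring. Qed.

Lemma vsub_swap a b : vsub a b = vscale (-1) (vsub b a).
Proof. vd. f_equal; [f_equal|]; ring. Qed.

Lemma dot_scale_r v s w : dot v (vscale s w) = s * dot v w.
Proof. vd; ring. Qed.
Lemma dot_scale_l v s w : dot (vscale s v) w = s * dot v w.
Proof. vd; ring. Qed.
Lemma dot_vzero_l n : dot vzero n = 0.
Proof. vd; ring. Qed.
Lemma dot_vzero_r a : dot a vzero = 0.
Proof. vd; ring. Qed.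
Lemma dot_self_cross a b : dot a (cross a b) = 0.
Proof. vd; ring. Qed.

Definition vtends0 (f : R -> V3) (L : V3) : Prop :=
  tends0 (fun h => vx (f h)) (vx L) /\ tends0 (fun h => vy (f h)) (vy L) /\
  tends0 (fun h => vz (f h)) (vz L).

Lemma vtends0_ext_loc f g L : (exists d, 0 < d /\ forall h, 0 < h < d -> f h = g h) ->
  vtends0 f L -> vtends0 g L.
Proof.
  intros [d [Hd E]] [A [B C]]. repeat split; (eapply tends0_ext_loc; [|eassumption]);
    exists d; split; auto; intros h Hh; rewrite E; auto.
Qed.

Lemma vtends0_const A : vtends0 (fun _ => A) A.
Proof. repeat split; apply tends0_const. Qed.

Lemma vtends0_add f g A B : vtends0 f A -> vtends0 g B ->
  vtends0 (fun h => vadd (f h) (g h)) (vadd A B).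
Proof. intros [? [? ?]] [? [? ?]]. repeat split; apply tends0_plus; auto. Qed.

Lemma vtends0_scale s f a A : tends0 s a -> vtends0 f A ->
  vtends0 (fun h => vscale (s h) (f h)) (vscale a A).
Proof. intros Hs [? [? ?]]. repeat split; apply tends0_mult; auto. Qed.

Lemma vtends0_cross f g A B : vtends0 f A -> vtends0 g B ->
  vtends0 (fun h => cross (f h) (g h)) (cross A B).
Proof. intros [? [? ?]] [? [? ?]]. repeat split; apply tends0_minus; apply tends0_mult; auto. Qed.

Lemma tends0_N1 f A : vtends0 f A -> tends0 (fun h => N1 (f h)) (N1 A).
Proof. intros [? [? ?]]. unfold N1. apply tends0_plus; [apply tends0_plus|]; apply tends0_abs; auto. Qed.

Lemma vtends0_normalize w w0 : vtends0 w w0 -> w0 <> vzero ->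
  vtends0 (fun h => vscale (/ vnorm (w h)) (w h)) (vscale (/ vnorm w0) w0).
Proof.
  intros Hw Hn. apply vtends0_scale; auto.
  pose proof (vnorm_pos w0 Hn). destruct Hw as [A [B C]].
  apply tends0_inv; [|lra]. apply tends0_comp_cont.
  - unfold dot. apply tends0_plus; [apply tends0_plus|]; apply tends0_mult; auto.
  - apply continuity_pt_sqrt. left; apply dot_pos; auto.
Qed.

Lemma vtends0_sub f g A B : vtends0 f A -> vtends0 g B ->
  vtends0 (fun h => vsub (f h) (g h)) (vsub A B).
Proof. intros [? [? ?]] [? [? ?]]. repeat split; apply tends0_minus; auto. Qed.

Lemma rlim_of_vtends0 F s L : vtends0 (fun h => F (s + h)) L -> rlim F s L.
Proof.
  intros H eps He.
  assert (HN : tends0 (fun h => N1 (vsub (F (s + h)) L)) 0).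
  { eapply tends0_eq.
    - apply tends0_N1, vtends0_sub; [exact H | apply vtends0_const].
    - unfold N1, vsub, vx, vy, vz; simpl. rewrite !Rminus_diag, Rabs_R0. ring. }
  rewrite tends0_def in HN. destruct (HN eps He) as [d [Hd Hd']].
  exists d; split; auto. intros t Ht. specialize (Hd' (t - s) ltac:(lra)).
  replace (s + (t - s)) with t in Hd' by ring. rewrite Rminus_0_r in Hd'.
  eapply Rle_lt_trans; [apply vnorm_le_N1|]. eapply Rle_lt_trans; [apply Rle_abs | exact Hd'].
Qed.

Lemma vtends0_of_rlim F s L : rlim F s L -> vtends0 (fun h => F (s + h)) L.
Proof.
  intros H. unfold vtends0. rewrite !tends0_def.
  repeat split; intros eps He; destruct (H eps He) as [d [Hd Hd']]; exists d; split; auto;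
    intros h Hh; specialize (Hd' (s + h) ltac:(lra));
    destruct (coord_le_vnorm (vsub (F (s + h)) L)) as [X [Y Z]];
    unfold vsub, vx, vy, vz in *; simpl in *; lra.
Qed.

Lemma rlim_unique F s L1 L2 : rlim F s L1 -> rlim F s L2 -> L1 = L2.
Proof.
  intros H1 H2. apply vtends0_of_rlim in H1, H2.
  destruct H1 as [A1 [B1 C1]], H2 as [A2 [B2 C2]].
  destruct L1 as [[x1 y1] z1], L2 as [[x2 y2] z2]; unfold vx, vy, vz in *; simpl in *.
  rewrite (tends0_unique _ _ _ A1 A2), (tends0_unique _ _ _ B1 B2), (tends0_unique _ _ _ C1 C2).
  reflexivity.
Qed.

Lemma llim_reflect F s L : llim F s L <-> rlim (fun t => F (2 * s - t)) s L.
Proof.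
  split; intros H eps He; destruct (H eps He) as [d [Hd A]]; exists d; split; auto;
    intros t Ht.
  - apply A. lra.
  - specialize (A (2 * s - t) ltac:(lra)). replace (2 * s - (2 * s - t)) with t in A by ring. auto.
Qed.

Lemma llim_unique F s L1 L2 : llim F s L1 -> llim F s L2 -> L1 = L2.
Proof. rewrite !llim_reflect. apply rlim_unique. Qed.

Lemma llim_of_vtends0 F s L : vtends0 (fun h => F (s - h)) L -> llim F s L.
Proof.
  intros H. apply llim_reflect, rlim_of_vtends0.
  eapply vtends0_ext_loc; [|exact H]. exists 1; split; [lra|].
  intros h _. f_equal. ring.
Qed.

Lemma epsilon_rlim F s L : rlim F s L -> epsilon inhV3 (rlim F s) = L.
Proof. intros H. apply (rlim_unique F s); auto. apply epsilon_spec. exists L; auto. Qed.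

Lemma epsilon_llim F s L : llim F s L -> epsilon inhV3 (llim F s) = L.
Proof. intros H. apply (llim_unique F s); auto. apply epsilon_spec. exists L; auto. Qed.

(** [jet c t0 k t] is [r(t) - r(t0)] for [k = 0] and the derivative
    [r^(k)(t)] for [k >= 1]; each coordinate is a derivative chain. *)

Definition dens_ok (c : rcurve) (t0 t1 : R) : Prop := forall t, t0 <= t <= t1 ->
  peval (den (cx c)) t <> 0 /\ peval (den (cy c)) t <> 0 /\ peval (den (cz c)) t <> 0.

Definition jet_x c t0 := shift0 (ratfun_chain (cx c)) (reval (cx c) t0).
Definition jet_y c t0 := shift0 (ratfun_chain (cy c)) (reval (cy c) t0).
Definition jet_z c t0 := shift0 (ratfun_chain (cz c)) (reval (cz c) t0).
Definition jet c t0 (k : nat) (t : R) : V3 := (jet_x c t0 k t, jet_y c t0 k t, jet_z c t0 k t).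

Lemma jet0 c t0 t : jet c t0 0 t = vsub (pt c t) (pt c t0). Proof. reflexivity. Qed.
Lemma jet1 c t0 t : jet c t0 1 t = Defs.d1 c t. Proof. reflexivity. Qed.
Lemma jet2 c t0 t : jet c t0 2 t = Defs.d2 c t. Proof. reflexivity. Qed.
Lemma jet3 c t0 t : jet c t0 3 t = Defs.d3 c t. Proof. reflexivity. Qed.

Lemma jet0_base c t0 : jet c t0 0 t0 = vzero.
Proof.
  unfold jet, jet_x, jet_y, jet_z, shift0, ratfun_chain, vzero; simpl.
  rewrite !Rminus_diag. auto.
Qed.

Lemma jet_chains c t0 t1 : dens_ok c t0 t1 ->
  deriv_chain (jet_x c t0) t0 t1 /\ deriv_chain (jet_y c t0) t0 t1 /\ deriv_chain (jet_z c t0) t0 t1.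
Proof. intros H. repeat split; apply shift0_chain, ratfun_chain_ok; intros; apply H; auto. Qed.

Definition jet_along c t0 (n : V3) (k : nat) (t : R) : R := dot (jet c t0 k t) n.

Lemma jet_along_chain c t0 t1 n : dens_ok c t0 t1 -> deriv_chain (jet_along c t0 n) t0 t1.
Proof.
  intros H. destruct (jet_chains c t0 t1 H) as [Hx [Hy Hz]].
  replace (jet_along c t0 n) with (lin3 (vx n) (vy n) (vz n) (jet_x c t0) (jet_y c t0) (jet_z c t0)).
  - apply lin3_chain; auto.
  - do 2 (apply functional_extensionality; intros).
    unfold lin3, jet_along, jet, dot, vx, vy, vz; simpl. ring.
Qed.

Lemma jet_cont c t0 t1 k s : dens_ok c t0 t1 -> t0 <= s <= t1 ->
  vtends0 (fun h => jet c t0 k (s + h)) (jet c t0 k s) /\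
  vtends0 (fun h => jet c t0 k (s - h)) (jet c t0 k s).
Proof.
  intros Hd Hs. destruct (jet_chains c t0 t1 Hd) as [Hx [Hy Hz]].
  repeat split; first [apply tends0_cont | apply tends0_cont_left]; eapply chain_cont; eauto.
Qed.

Lemma jet_along_rational c t0 t1 n : t0 <= t1 -> dens_ok c t0 t1 ->
  exists P Q : list R, forall t, t0 <= t <= t1 ->
    peval P t = jet_along c t0 n 0 t * peval Q t /\ peval Q t <> 0.
Proof.
  intros Ht Hd.
  set (p1 := Defs.num (cx c)); set (q1 := den (cx c)); set (p2 := Defs.num (cy c));
    set (q2 := den (cy c)); set (p3 := Defs.num (cz c)); set (q3 := den (cz c)).
  set (K := dot (pt c t0) n).
  exists (padd (padd (padd (map (Rmult (vx n)) (pmul p1 (pmul q2 q3)))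
                           (map (Rmult (vy n)) (pmul p2 (pmul q1 q3))))
                     (map (Rmult (vz n)) (pmul p3 (pmul q1 q2))))
               (map (Rmult (- K)) (pmul q1 (pmul q2 q3)))), (pmul q1 (pmul q2 q3)).
  destruct (Hd t0 ltac:(lra)) as [H01 [H02 H03]].
  intros t Ht'. destruct (Hd t Ht') as [H1 [H2 H3]].
  rewrite !peval_padd, !peval_scale, !peval_pmul. split.
  - unfold jet_along. rewrite jet0. unfold K, pt, reval, p1, p2, p3, q1, q2, q3 in *.
    vd. field. tauto.
  - repeat apply Rmult_integral_contrapositive; auto.
Qed.

Lemma deriv_of_locally_zero f x l a b : a < x < b -> (forall y, a < y < b -> f y = 0) ->
  derivable_pt_lim f x l -> l = 0.
Proof.
  intros Hx Hz H. destruct (Req_dec l 0) as [|Hl]; auto. exfalso.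
  destruct (H (Rabs l) (Rabs_pos_lt _ Hl)) as [d Hd].
  set (h := Rmin d (Rmin (x - a) (b - x)) / 2).
  pose proof (cond_pos d); pose proof (Rmin_l d (Rmin (x - a) (b - x)));
    pose proof (Rmin_r d (Rmin (x - a) (b - x))); pose proof (Rmin_l (x - a) (b - x));
    pose proof (Rmin_r (x - a) (b - x)).
  assert (0 < Rmin d (Rmin (x - a) (b - x))) by (repeat apply Rmin_pos; lra).
  assert (0 < h) by (unfold h; lra).
  specialize (Hd h ltac:(apply Rgt_not_eq; lra) ltac:(rewrite Rabs_right; unfold h in *; lra)).
  rewrite !Hz in Hd by (unfold h in *; lra).
  replace ((0 - 0) / h - l) with (- l) in Hd by (field; lra).
  rewrite Rabs_Ropp in Hd. lra.
Qed.

(** Nondegeneracy at [t0]: since the torsion does not vanish on [(t0, t1)], no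
    coordinate of the curve is flat at [t0].  Otherwise the numerator polynomial of
    [n . (r - r(t0))] would vanish identically, so [n] would be orthogonal to
    [r'], [r''] and [r'''], forcing [det(r', r'', r''') = 0]. *)
Lemma jet_not_flat c t0 t1 n : t0 < t1 -> dens_ok c t0 t1 ->
  (forall t, t0 < t < t1 -> det3 (Defs.d1 c t) (Defs.d2 c t) (Defs.d3 c t) <> 0) -> n <> vzero ->
  exists k, jet_along c t0 n k t0 <> 0.
Proof.
  intros Ht Hd Htor Hn. apply not_all_not_ex. intros Hflat.
  destruct (jet_along_rational c t0 t1 n ltac:(lra) Hd) as [P [Q HPQ]].
  set (G := jet_along c t0 n) in *.
  assert (HC : deriv_chain G t0 t1) by (apply jet_along_chain; auto).
  assert (HP : forall t, peval P t = 0).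
  { apply (poly_zero_of_flat P t0). intros m.
    apply (tends0_ext_loc (fun h => G 0%nat (t0 + h) / h ^ m * peval Q (t0 + h))).
    - exists (t1 - t0); split; [lra|]. intros h Hh.
      rewrite (proj1 (HPQ (t0 + h) ltac:(lra))). field. apply pow_nonzero; lra.
    - eapply tends0_eq; [apply tends0_mult|].
      + apply (taylor_ratio m G t0 t1 HC Ht). intros j _. apply NNPP, Hflat.
      + apply tends0_cont. apply derivable_continuous_pt. eexists. apply peval_deriv.
      + replace (G m t0) with 0 by (symmetry; apply NNPP, Hflat). unfold Rdiv; ring. }
  assert (HG : forall k t, t0 < t < t1 -> G k t = 0).
  { induction k as [|k IH]; intros t Ht'.
    - destruct (HPQ t ltac:(lra)) as [E HQ]. rewrite HP in E.
      symmetry in E. apply Rmult_integral in E. destruct E; [auto | contradiction].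
    - apply (deriv_of_locally_zero (G k) t (G (S k) t) t0 t1); auto. apply HC; lra. }
  set (t := (t0 + t1) / 2). assert (Htt : t0 < t < t1) by (unfold t; lra).
  apply (Htor t Htt).
  pose proof (HG 1%nat t Htt) as A. pose proof (HG 2%nat t Htt) as B. pose proof (HG 3%nat t Htt) as C.
  unfold G, jet_along in A, B, C. rewrite jet1 in A. rewrite jet2 in B. rewrite jet3 in C.
  pose proof (dot_pos n Hn).
  assert (Id : det3 (Defs.d1 c t) (Defs.d2 c t) (Defs.d3 c t) * dot n n =
     dot (Defs.d1 c t) n * dot n (cross (Defs.d2 c t) (Defs.d3 c t)) +
     dot (Defs.d2 c t) n * dot n (cross (Defs.d3 c t) (Defs.d1 c t))
     + dot (Defs.d3 c t) n * dot n (cross (Defs.d1 c t) (Defs.d2 c t))) by (vd; ring).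
  rewrite A, B, C in Id. apply (Rmult_eq_reg_r (dot n n)); [|lra]. rewrite Id; ring.
Qed.

(** * The adapted frame at the base point *)

Definition adapted_orders (c : rcurve) (t0 : R) (m1 m2 m3 : nat) : Prop :=
  let e1 := jet c t0 m1 t0 in let e2 := jet c t0 m2 t0 in let e3 := jet c t0 m3 t0 in
  (1 <= m1)%nat /\ (m1 < m2)%nat /\ (m2 < m3)%nat /\
  (forall j, (j < m1)%nat -> jet c t0 j t0 = vzero) /\ e1 <> vzero /\
  (forall j, (j < m2)%nat -> cross e1 (jet c t0 j t0) = vzero) /\ cross e1 e2 <> vzero /\
  (forall j, (j < m3)%nat -> det3 e1 e2 (jet c t0 j t0) = 0) /\ det3 e1 e2 e3 <> 0.

Lemma least_index (P : nat -> Prop) : (exists k, P k) ->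
  exists m, P m /\ forall j, (j < m)%nat -> ~ P j.
Proof.
  intros [k Hk]. induction k as [k IH] using (well_founded_induction Wf_nat.lt_wf).
  destruct (classic (exists j, (j < k)%nat /\ P j)) as [[j [Hj Pj]]|N].
  - apply (IH j Hj Pj).
  - exists k; split; auto. intros j Hj Pj. apply N; eauto.
Qed.

Lemma parallel_orthogonal e v n : e <> vzero -> cross e v = vzero -> dot n e = 0 -> dot v n = 0.
Proof.
  intros He Hc Hn. pose proof (dot_pos e He).
  assert (Id : dot e e * dot v n = dot e v * dot n e - dot n (cross e (cross e v))) by (vd; ring).
  rewrite Hc, Hn in Id. replace (dot n (cross e vzero)) with 0 in Id by (vd; ring).
  apply (Rmult_eq_reg_l (dot e e)); [|lra]. rewrite Id. ring.
Qed.

Lemma orthogonal_exists e : e <> vzero -> exists n, n <> vzero /\ dot n e = 0.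
Proof.
  intros He. destruct (classic (cross e (1, 0, 0) = vzero)) as [E1|E1].
  - destruct (classic (cross e (0, 1, 0) = vzero)) as [E2|E2].
    + exfalso. apply He. vd. injection E1; injection E2; intros. f_equal; [f_equal|]; lra.
    + exists (cross e (0, 1, 0)); split; auto. vd; ring.
  - exists (cross e (1, 0, 0)); split; auto. vd; ring.
Qed.

(** Adapted orders exist: each one is found by [jet_not_flat] applied to a vector
    orthogonal to the span of the previously found derivatives. *)
Lemma adapted_orders_exist c t0 t1 : t0 < t1 -> dens_ok c t0 t1 ->
  (forall t, t0 < t < t1 -> det3 (Defs.d1 c t) (Defs.d2 c t) (Defs.d3 c t) <> 0) ->
  exists m1 m2 m3, adapted_orders c t0 m1 m2 m3.
Proof.
  intros Ht Hd Htor. pose (J k := jet c t0 k t0).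
  assert (NF : forall n, n <> vzero -> exists k, dot (J k) n <> 0)
    by exact (fun n => jet_not_flat c t0 t1 n Ht Hd Htor).
  destruct (least_index (fun k => J k <> vzero)) as [m1 [Hne1 M1]].
  { destruct (NF (1, 0, 0) ltac:(intro E; injection E; lra)) as [k Hk].
    exists k. intro E. rewrite E, dot_vzero_l in Hk. auto. }
  assert (Hm1 : (1 <= m1)%nat) by (destruct m1; [contradiction (Hne1 (jet0_base c t0)) | lia]).
  destruct (least_index (fun k => cross (J m1) (J k) <> vzero)) as [m2 [Hne2 M2]].
  { destruct (orthogonal_exists (J m1) Hne1) as [n [Hn Hperp]].
    destruct (NF n Hn) as [k Hk]. exists k. intro E. apply Hk, (parallel_orthogonal (J m1)); auto. }
  assert (H12 : (m1 < m2)%nat).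
  { destruct (Nat.lt_ge_cases m1 m2) as [|G]; auto. exfalso. apply Hne2.
    assert (Hc : forall a b : V3, b = a \/ b = vzero -> cross a b = vzero)
      by (intros a b [-> | ->]; vd; f_equal; try f_equal; ring).
    apply Hc. destruct (Nat.eq_dec m1 m2) as [<-|E]; [left; auto | right].
    apply NNPP, M1. lia. }
  destruct (least_index (fun k => det3 (J m1) (J m2) (J k) <> 0)) as [m3 [Hne3 M3]].
  { destruct (NF (cross (J m1) (J m2)) Hne2) as [k Hk]. exists k.
    replace (det3 (J m1) (J m2) (J k)) with (dot (J k) (cross (J m1) (J m2)))
      by (generalize (J m1) (J m2) (J k); intros; vd; ring). auto. }
  assert (H23 : (m2 < m3)%nat).
  { destruct (Nat.lt_ge_cases m2 m3) as [|G]; auto. exfalso. apply Hne3.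
    destruct (Nat.eq_dec m2 m3) as [<-|E].
    { generalize (J m1) (J m2); intros; vd; ring. }
    replace (det3 (J m1) (J m2) (J m3)) with (- dot (J m2) (cross (J m1) (J m3)))
      by (generalize (J m1) (J m2) (J m3); intros; vd; ring).
    rewrite (NNPP _ (M2 m3 ltac:(lia))), dot_vzero_r. ring. }
  exists m1, m2, m3. repeat split; auto; intros j Hj; apply NNPP;
    first [apply M1 | apply M2 | apply M3]; auto.
Qed.

Definition comb (e1 e2 e3 : V3) (x y z : R) : V3 :=
  vadd (vadd (vscale x e1) (vscale y e2)) (vscale z e3).

(** Cramer's rule: the coordinates of [v] are its products with the dual frame. *)
Lemma cramer e1 e2 e3 v : det3 e1 e2 e3 <> 0 ->
  v = comb e1 e2 e3 (dot v (vscale (/ det3 e1 e2 e3) (cross e2 e3)))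
        (dot v (vscale (/ det3 e1 e2 e3) (cross e3 e1)))
        (dot v (vscale (/ det3 e1 e2 e3) (cross e1 e2))).
Proof. intros H. unfold comb. vd. f_equal; [f_equal|]; field; auto. Qed.

Lemma cross_comb e1 e2 e3 x1 y1 z1 x2 y2 z2 :
  cross (comb e1 e2 e3 x1 y1 z1) (comb e1 e2 e3 x2 y2 z2) =
  comb (cross e2 e3) (cross e3 e1) (cross e1 e2)
       (y1 * z2 - z1 * y2) (z1 * x2 - x1 * z2) (x1 * y2 - y1 * x2).
Proof. unfold comb. vd. f_equal; [f_equal|]; ring. Qed.

Lemma dot_comb_dual e1 e2 e3 x y z a b c :
  dot (comb e1 e2 e3 x y z) (comb (cross e2 e3) (cross e3 e1) (cross e1 e2) a b c) =
  det3 e1 e2 e3 * (x * a + y * b + z * c).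
Proof. unfold comb. vd. ring. Qed.

Lemma dot_e2_dual e1 e2 e3 : dot e2 (cross e3 e1) = det3 e1 e2 e3.
Proof. vd. ring. Qed.

Lemma dot_e3_dual e1 e2 e3 : dot e3 (cross e1 e2) = det3 e1 e2 e3.
Proof. vd. ring. Qed.

Lemma dot_dual2_parallel e1 e3 v : cross e1 v = vzero -> dot v (cross e3 e1) = 0.
Proof.
  intros H. replace (dot v (cross e3 e1)) with (dot e3 (cross e1 v)) by (vd; ring).
  rewrite H, dot_vzero_r. ring.
Qed.

Lemma dot_dual3 e1 e2 v : dot v (cross e1 e2) = det3 e1 e2 v.
Proof. vd. ring. Qed.

Lemma dot_e1_dual e1 e2 e3 a b c :
  dot e1 (comb (cross e2 e3) (cross e3 e1) (cross e1 e2) a b c) = det3 e1 e2 e3 * a.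
Proof. unfold comb. vd. ring. Qed.

Lemma dot_comb_f3 e1 e2 e3 x y z : dot (comb e1 e2 e3 x y z) (cross e1 e2) = det3 e1 e2 e3 * z.
Proof. unfold comb. vd. ring. Qed.

Lemma comb_x00 e1 e2 e3 x : comb e1 e2 e3 x 0 0 = vscale x e1.
Proof. unfold comb. vd. f_equal; [f_equal|]; ring. Qed.

Lemma comb_00 e1 e2 e3 z : comb e1 e2 e3 0 0 z = vscale z e3.
Proof. unfold comb. vd. f_equal; [f_equal|]; ring. Qed.

Lemma scale_comb s e1 e2 e3 x y z :
  vscale s (comb e1 e2 e3 x y z) = comb e1 e2 e3 (s * x) (s * y) (s * z).
Proof. unfold comb. vd. f_equal; [f_equal|]; ring. Qed.

Lemma vtends0_comb e1 e2 e3 x y z a b c : tends0 x a -> tends0 y b -> tends0 z c ->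
  vtends0 (fun h => comb e1 e2 e3 (x h) (y h) (z h)) (comb e1 e2 e3 a b c).
Proof.
  intros. unfold comb. apply vtends0_add; [apply vtends0_add|];
    apply vtends0_scale; auto; apply vtends0_const.
Qed.

(** The vertex on the tangent line [P + lambda a] that lies on both planes;
    the plane through [P] contains the line, the other one cuts it once. *)
Lemma tet_vertex_offset (P Q a gp gm : V3) : dot a gp = 0 -> dot a gm <> 0 ->
  vsub (epsilon inhV3 (fun X => on_line P a X /\ (on_plane P gp X /\ on_plane Q gm X))) P
  = vscale (dot (vsub Q P) gm / dot a gm) a.
Proof.
  intros H1 H2. set (lam := dot (vsub Q P) gm / dot a gm).
  assert (Hs : on_line P a (vadd P (vscale lam a)) /\
      (on_plane P gp (vadd P (vscale lam a)) /\ on_plane Q gm (vadd P (vscale lam a)))).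
  { split; [exists lam; reflexivity|]. unfold on_plane. split.
    - replace (dot (vsub (vadd P (vscale lam a)) P) gp) with (lam * dot a gp) by (vd; ring).
      rewrite H1; ring.
    - replace (dot (vsub (vadd P (vscale lam a)) Q) gm) with (lam * dot a gm - dot (vsub Q P) gm)
        by (vd; ring).
      unfold lam; field; auto. }
  destruct (epsilon_spec inhV3 (fun X => on_line P a X /\ (on_plane P gp X /\ on_plane Q gm X))
    (ex_intro _ _ Hs)) as [[l E] [_ Hq]].
  set (v := epsilon inhV3 _) in *. unfold on_plane in Hq. rewrite E in Hq |- *.
  replace (dot (vsub (vadd P (vscale l a)) Q) gm) with (l * dot a gm - dot (vsub Q P) gm)
    in Hq by (vd; ring).
  assert (l = lam) by (unfold lam; apply (Rmult_eq_reg_r (dot a gm)); auto; field_simplify; auto; lra).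
  subst l. vd. f_equal; [f_equal|]; ring.
Qed.

Lemma tet_vertex_offset' (P Q a gp gm : V3) : dot a gm = 0 -> dot a gp <> 0 ->
  vsub (epsilon inhV3 (fun X => on_line Q a X /\ (on_plane P gp X /\ on_plane Q gm X))) Q
  = vscale (dot (vsub P Q) gp / dot a gp) a.
Proof.
  intros H1 H2.
  replace (fun X => on_line Q a X /\ (on_plane P gp X /\ on_plane Q gm X)) with
          (fun X => on_line Q a X /\ (on_plane Q gm X /\ on_plane P gp X))
    by (apply functional_extensionality; intros X; apply propositional_extensionality; tauto).
  apply tet_vertex_offset; auto.
Qed.

Lemma alpha_m_regular c t0 t1 t : dens_ok c t0 t1 -> t0 <= t <= t1 -> Defs.d1 c t <> vzero ->
  alpha_m c t = alpha c t.
Proof.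
  intros Hd Ht Hr. apply epsilon_llim, llim_of_vtends0.
  destruct (jet_cont c t0 t1 1 t Hd Ht) as [_ W].
  exact (vtends0_normalize _ _ W Hr).
Qed.

Lemma gamma_m_regular c t0 t1 t : dens_ok c t0 t1 -> t0 <= t <= t1 ->
  cross (Defs.d1 c t) (Defs.d2 c t) <> vzero -> gamma_m c t = gamma c t.
Proof.
  intros Hd Ht Hr. apply epsilon_llim, llim_of_vtends0.
  destruct (jet_cont c t0 t1 1 t Hd Ht) as [_ W1].
  destruct (jet_cont c t0 t1 2 t Hd Ht) as [_ W2].
  exact (vtends0_normalize _ _ (vtends0_cross _ _ _ _ W1 W2) Hr).
Qed.

Lemma taylor_coef_1_pos m : (1 <= m)%nat -> 0 < taylor_coef m 1.
Proof.
  intros H. unfold taylor_coef. destruct (Nat.leb_spec 1 m); [|lia].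
  apply Rinv_0_lt_compat, lt_0_INR, lt_O_fact.
Qed.

(** The limit of the 2x2 minor of scaled first and second derivatives of two
    coordinates vanishing to orders [a] and [b]; it is positive when [a < b]. *)
Definition taylor_minor (a b : nat) : R :=
  taylor_coef a 1 * taylor_coef b 2 - taylor_coef b 1 * taylor_coef a 2.

Lemma taylor_minor_pos a b : (1 <= a)%nat -> (a < b)%nat -> 0 < taylor_minor a b.
Proof.
  intros Ha Hab. unfold taylor_minor, taylor_coef.
  destruct (Nat.leb_spec 1 a); [|lia]. destruct (Nat.leb_spec 2 b); [|lia].
  destruct (Nat.leb_spec 1 b); [|lia].
  assert (F : forall n, 0 < INR (fact n)) by (intros; apply lt_0_INR, lt_O_fact).
  destruct (Nat.leb_spec 2 a).
  - destruct a as [|[|p]]; try lia. destruct b as [|[|q]]; try lia.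
    replace (S (S p) - 1)%nat with (S p) by lia. replace (S (S q) - 2)%nat with q by lia.
    replace (S (S q) - 1)%nat with (S q) by lia. replace (S (S p) - 2)%nat with p by lia.
    rewrite !fact_simpl, !mult_INR.
    pose proof (F p); pose proof (F q).
    assert (INR (S p) < INR (S q)) by (apply lt_INR; lia).
    assert (0 < INR (S p)) by (apply lt_0_INR; lia).
    replace (/ (INR (S p) * INR (fact p)) * / INR (fact q) -
             / (INR (S q) * INR (fact q)) * / INR (fact p))
      with ((INR (S q) - INR (S p)) / (INR (S p) * INR (S q) * INR (fact p) * INR (fact q)))
      by (field; lra).
    apply Rdiv_lt_0_compat; [lra|]. repeat apply Rmult_lt_0_compat; lra.
  - rewrite Rmult_0_r, Rminus_0_r. apply Rmult_lt_0_compat; apply Rinv_0_lt_compat, F.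
Qed.

Lemma rlim_normalized (F : R -> V3) s w L : vtends0 w L -> L <> vzero ->
  (exists d, 0 < d /\ forall h, 0 < h < d -> F (s + h) = vscale (/ vnorm (w h)) (w h)) ->
  epsilon inhV3 (rlim F s) = vscale (/ vnorm L) L.
Proof.
  intros Hw HL HF. apply epsilon_rlim, rlim_of_vtends0.
  eapply vtends0_ext_loc; [|exact (vtends0_normalize _ _ Hw HL)].
  destruct HF as [d [Hd E]]. exists d; split; auto. intros h Hh. symmetry; auto.
Qed.

(** * The tetrahedron in the adapted frame

    Write the jet in the frame [e1, e2, e3] of adapted derivatives: its
    coordinates [X, Y, Z] vanish at [t0] to the orders [m1 < m2 < m3].  Scaling
    everything by the appropriate powers of [h = t - t0] gives functions with
    finite limits, from which the one-sided Frenet data at [t0] and both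
    vertex offsets of the tetrahedron can be read off. *)
Section Adapted_frame.

Variables (c : rcurve) (t0 t1 : R) (m1 m2 m3 : nat).
Hypothesis Ht : t0 < t1.
Hypothesis Hd : dens_ok c t0 t1.
Hypothesis Hreg : forall t, t0 < t <= t1 ->
  Defs.d1 c t <> vzero /\ cross (Defs.d1 c t) (Defs.d2 c t) <> vzero.

Let e1 := jet c t0 m1 t0.
Let e2 := jet c t0 m2 t0.
Let e3 := jet c t0 m3 t0.
Hypotheses (Hm1 : (1 <= m1)%nat) (H12 : (m1 < m2)%nat) (H23 : (m2 < m3)%nat).
Hypotheses (Hlow1 : forall j, (j < m1)%nat -> jet c t0 j t0 = vzero) (Hne1 : e1 <> vzero).
Hypotheses (Hlow2 : forall j, (j < m2)%nat -> cross e1 (jet c t0 j t0) = vzero)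
           (Hne2 : cross e1 e2 <> vzero).
Hypotheses (Hlow3 : forall j, (j < m3)%nat -> det3 e1 e2 (jet c t0 j t0) = 0)
           (Hne3 : det3 e1 e2 e3 <> 0).

Let D := det3 e1 e2 e3.
Let f1 := cross e2 e3.
Let f2 := cross e3 e1.
Let f3 := cross e1 e2.
Let X := jet_along c t0 (vscale (/ D) f1).
Let Y := jet_along c t0 (vscale (/ D) f2).
Let Z := jet_along c t0 (vscale (/ D) f3).

Lemma jet_coords k t : jet c t0 k t = comb e1 e2 e3 (X k t) (Y k t) (Z k t).
Proof. exact (cramer e1 e2 e3 _ Hne3). Qed.

Definition scaled (G : nat -> R -> R) (m k : nat) (h : R) : R := G k (t0 + h) * h ^ k / h ^ m.

Lemma coord_limits k :
  tends0 (scaled X m1 k) (taylor_coef m1 k) /\ tends0 (scaled Y m2 k) (taylor_coef m2 k) /\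
  tends0 (scaled Z m3 k) (taylor_coef m3 k).
Proof.
  assert (L : forall n m, (forall j, (j < m)%nat -> jet_along c t0 n j t0 = 0) ->
             jet_along c t0 n m t0 = 1 ->
             tends0 (scaled (jet_along c t0 n) m k) (taylor_coef m k)).
  { intros n m H0 H1. eapply tends0_eq.
    - apply (scaled_deriv_limit _ t0 t1); auto. apply jet_along_chain; auto.
    - rewrite H1; ring. }
  assert (HD : D <> 0) by exact Hne3.
  unfold jet_along in L. repeat split; apply L; intros; rewrite dot_scale_r.
  - rewrite Hlow1, dot_vzero_l; auto. ring.
  - change (/ D * D = 1). field. exact HD.
  - unfold f2. rewrite dot_dual2_parallel; [ring | apply Hlow2; auto].
  - unfold f2. rewrite dot_e2_dual. change (/ D * D = 1). field. exact HD.
  - unfold f3. rewrite dot_dual3, Hlow3; auto. ring.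
  - unfold f3. rewrite dot_e3_dual. change (/ D * D = 1). field. exact HD.
Qed.

Definition minor1 (t : R) : R := Y 1 t * Z 2 t - Z 1 t * Y 2 t.
Definition minor2 (t : R) : R := Z 1 t * X 2 t - X 1 t * Z 2 t.
Definition minor3 (t : R) : R := X 1 t * Y 2 t - Y 1 t * X 2 t.

Lemma cross_coords t :
  cross (Defs.d1 c t) (Defs.d2 c t) = comb f1 f2 f3 (minor1 t) (minor2 t) (minor3 t).
Proof. rewrite <- (jet1 c t0 t), <- (jet2 c t0 t), !jet_coords. apply cross_comb. Qed.

Definition mu1 (h : R) : R := scaled Y m2 1 h * scaled Z m3 2 h - scaled Z m3 1 h * scaled Y m2 2 h.
Definition mu2 (h : R) : R := scaled Z m3 1 h * scaled X m1 2 h - scaled X m1 1 h * scaled Z m3 2 h.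
Definition mu3 (h : R) : R := scaled X m1 1 h * scaled Y m2 2 h - scaled Y m2 1 h * scaled X m1 2 h.

Lemma scaled_minors h : 0 < h ->
  mu1 h = minor1 (t0 + h) * h ^ 3 / (h ^ m2 * h ^ m3) /\
  mu2 h = minor2 (t0 + h) * h ^ 3 / (h ^ m1 * h ^ m3) /\
  mu3 h = minor3 (t0 + h) * h ^ 3 / (h ^ m1 * h ^ m2).
Proof.
  intros Hh. assert (forall m, h ^ m <> 0) by (intros; apply pow_nonzero; lra).
  unfold mu1, mu2, mu3, minor1, minor2, minor3, scaled. repeat split; field; auto.
Qed.

Lemma scaled_minor_limits :
  tends0 mu1 (taylor_minor m2 m3) /\ tends0 mu2 (- taylor_minor m1 m3) /\
  tends0 mu3 (taylor_minor m1 m2).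
Proof.
  destruct (coord_limits 1) as [LX1 [LY1 LZ1]], (coord_limits 2) as [LX2 [LY2 LZ2]].
  unfold taylor_minor. repeat split; (eapply tends0_eq; [apply tends0_minus; apply tends0_mult; eauto|]);
    ring.
Qed.

Lemma eventually_nondegenerate : exists d, 0 < d /\ d <= t1 - t0 /\
  forall h, 0 < h < d -> 0 < mu1 h /\ 0 < scaled Z m3 1 h.
Proof.
  destruct (tends0_eventually_pos _ _ (proj1 scaled_minor_limits)
                                  (taylor_minor_pos m2 m3 ltac:(lia) H23))
    as [dA [HdA EA]].
  destruct (tends0_eventually_pos _ _ (proj2 (proj2 (coord_limits 1))) (taylor_coef_1_pos m3 ltac:(lia)))
    as [dB [HdB EB]].
  exists (Rmin (t1 - t0) (Rmin dA dB)). pose proof (Rmin_l (t1 - t0) (Rmin dA dB)).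
  pose proof (Rmin_r (t1 - t0) (Rmin dA dB)); pose proof (Rmin_l dA dB); pose proof (Rmin_r dA dB).
  repeat split; [repeat apply Rmin_pos; lra | lra | apply EA; lra | apply EB; lra].
Qed.

Lemma alpha_p_base : alpha_p c t0 = vscale (/ vnorm e1) e1.
Proof.
  set (w h := comb e1 e2 e3 (scaled X m1 1 h) (scaled Y m2 1 h * (h ^ m2 / h ^ m1))
                             (scaled Z m3 1 h * (h ^ m3 / h ^ m1))).
  assert (Hq := taylor_coef_1_pos m1 Hm1).
  assert (Hw : vtends0 w (vscale (taylor_coef m1 1) e1)).
  { rewrite <- (comb_x00 e1 e2 e3). destruct (coord_limits 1) as [LX [LY LZ]].
    apply vtends0_comb; auto;
      (eapply tends0_eq; [apply tends0_mult; [eauto | apply tends0_pow_ratio; lia]|]);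
      ring. }
  unfold alpha_p. rewrite <- (normalize_scale (taylor_coef m1 1) e1) by (auto; lra).
  apply (rlim_normalized _ _ w); [exact Hw | apply vscale_nz; auto; lra|].
  exists (t1 - t0); split; [lra|]. intros h Hh.
  assert (forall m, 0 < h ^ m) by (intros; apply pow_lt; lra).
  assert (forall m, h ^ m <> 0) by (intros; apply pow_nonzero; lra).
  assert (0 < h / h ^ m1) by (apply Rdiv_lt_0_compat; auto; lra).
  replace (w h) with (vscale (h / h ^ m1) (Defs.d1 c (t0 + h))).
  - unfold alpha. rewrite normalize_scale; auto. apply Hreg; lra.
  - rewrite <- (jet1 c t0), jet_coords, scale_comb. unfold w, scaled.
    f_equal; simpl; field; repeat split; auto; lra.
Qed.

Lemma gamma_p_base : gamma_p c t0 = vscale (/ vnorm f3) f3.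
Proof.
  set (w h := comb f1 f2 f3 (mu1 h * (h ^ m3 / h ^ m1)) (mu2 h * (h ^ m3 / h ^ m2)) (mu3 h)).
  assert (Hq := taylor_minor_pos m1 m2 Hm1 H12).
  assert (Hw : vtends0 w (vscale (taylor_minor m1 m2) f3)).
  { rewrite <- (comb_00 f1 f2 f3). destruct scaled_minor_limits as [L1 [L2 L3]].
    apply vtends0_comb; auto;
      (eapply tends0_eq; [apply tends0_mult; [eauto | apply tends0_pow_ratio; lia]|]);
      ring. }
  unfold gamma_p. rewrite <- (normalize_scale (taylor_minor m1 m2) f3) by (auto; lra).
  apply (rlim_normalized _ _ w); [exact Hw | apply vscale_nz; auto; lra|].
  exists (t1 - t0); split; [lra|]. intros h Hh.
  assert (forall m, 0 < h ^ m) by (intros; apply pow_lt; lra).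
  assert (forall m, h ^ m <> 0) by (intros; apply pow_nonzero; lra).
  assert (0 < h ^ 3 / (h ^ m1 * h ^ m2))
    by (apply Rdiv_lt_0_compat; auto; apply Rmult_lt_0_compat; auto).
  replace (w h) with
    (vscale (h ^ 3 / (h ^ m1 * h ^ m2)) (cross (Defs.d1 c (t0 + h)) (Defs.d2 c (t0 + h)))).
  - unfold gamma. rewrite normalize_scale; auto. apply Hreg; lra.
  - destruct (scaled_minors h ltac:(lra)) as [E1 [E2 E3]].
    rewrite cross_coords, scale_comb. unfold w. rewrite E1, E2, E3.
    f_equal; field; repeat split; auto.
Qed.

(** The first inner vertex lies on the right tangent at [t0], at the signed
    distance [lam h] from [r(t0)]; the powers of [h] make its vanishing visible. *)
Definition lam (h : R) : R :=
  vnorm e1 * h ^ m1 *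
  (scaled X m1 0 h + scaled Y m2 0 h * mu2 h / mu1 h + scaled Z m3 0 h * mu3 h / mu1 h).

Lemma tet_v1_offset h : 0 < h <= t1 - t0 -> 0 < mu1 h ->
  vsub (tet_v1 c t0 (t0 + h)) (pt c t0) = vscale (lam h) (vscale (/ vnorm e1) e1).
Proof.
  intros Hh Hmu. set (t := t0 + h). destruct (Hreg t ltac:(unfold t; lra)) as [Hr1 Hr2].
  assert (Hp : forall m, h ^ m <> 0) by (intros; apply pow_nonzero; lra).
  destruct (scaled_minors h ltac:(lra)) as [E1 [E2 E3]].
  assert (Hm : minor1 t <> 0) by (intro E; rewrite E1 in Hmu; fold t in Hmu; rewrite E in Hmu;
                                  unfold Rdiv in Hmu; lra).
  pose proof (vnorm_pos e1 Hne1). pose proof (vnorm_pos _ Hr2) as HC. rewrite cross_coords in HC.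
  unfold tet_v1, in_L.
  rewrite alpha_p_base, gamma_p_base, (gamma_m_regular c t0 t1) by (auto; unfold t; lra).
  unfold gamma. rewrite tet_vertex_offset.
  - f_equal. rewrite !dot_scale_l, !dot_scale_r, <- (jet0 c t0), jet_coords, cross_coords.
    unfold f1, f2, f3 in HC |- *. rewrite dot_comb_dual, dot_e1_dual.
    unfold lam. rewrite E1, E2, E3. unfold scaled. fold t. simpl. field.
    repeat split; auto; apply Rgt_not_eq; lra.
  - rewrite dot_scale_l, dot_scale_r. unfold f3. rewrite dot_self_cross. ring.
  - rewrite dot_scale_l, dot_scale_r, cross_coords. unfold f1, f2, f3 in HC |- *. rewrite dot_e1_dual.
    repeat apply Rmult_integral_contrapositive_currified; auto;
      apply Rinv_neq_0_compat, Rgt_not_eq; lra.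
Qed.

(** The second inner vertex lies on the tangent at [t], at a distance
    proportional to [Z (t) / Z' (t)], which is of order [h]. *)
Lemma tet_v2_offset h : 0 < h <= t1 - t0 -> 0 < scaled Z m3 1 h ->
  vsub (tet_v2 c t0 (t0 + h)) (pt c (t0 + h)) =
  vscale (- (h * scaled Z m3 0 h / scaled Z m3 1 h)) (Defs.d1 c (t0 + h)).
Proof.
  intros Hh HZ. set (t := t0 + h). destruct (Hreg t ltac:(unfold t; lra)) as [Hr1 Hr2].
  assert (Hp : forall m, h ^ m <> 0) by (intros; apply pow_nonzero; lra).
  assert (HZ1 : Z 1 t <> 0) by (intro E; unfold scaled in HZ; fold t in HZ; rewrite E in HZ;
                                 unfold Rdiv in HZ; lra).
  pose proof (vnorm_pos f3 Hne2) as HF. unfold f3 in HF.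
  pose proof (vnorm_pos _ Hr1) as HN. rewrite <- (jet1 c t0), jet_coords in HN.
  unfold tet_v2, in_L. rewrite (alpha_m_regular c t0 t1), gamma_p_base, (gamma_m_regular c t0 t1)
    by (auto; unfold t; lra).
  unfold alpha, gamma. rewrite tet_vertex_offset'.
  - rewrite vscale_vscale. f_equal.
    rewrite vsub_swap, <- (jet0 c t0), <- (jet1 c t0), !dot_scale_l, !dot_scale_r, !jet_coords.
    unfold f3. rewrite !dot_comb_f3. unfold scaled. fold t. simpl.
    field. repeat split; auto; apply Rgt_not_eq; lra.
  - rewrite dot_scale_l, dot_scale_r, dot_self_cross. ring.
  - rewrite dot_scale_l, dot_scale_r, <- (jet1 c t0), jet_coords. unfold f3. rewrite dot_comb_f3.
    repeat apply Rmult_integral_contrapositive_currified; auto;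
      apply Rinv_neq_0_compat, Rgt_not_eq; lra.
Qed.

Lemma tet_v1_offset_vanishes : tends0 (fun h => N1 (vsub (tet_v1 c t0 (t0 + h)) (pt c t0))) 0.
Proof.
  destruct eventually_nondegenerate as [d [Hd0 [Hd1 Hnd]]].
  apply (tends0_ext_loc (fun h => Rabs (lam h) * N1 (vscale (/ vnorm e1) e1))).
  { exists d; split; auto. intros h Hh. destruct (Hnd h Hh) as [Hmu _].
    rewrite tet_v1_offset, (N1_scale (lam h)) by (try split; auto; lra). reflexivity. }
  destruct (coord_limits 0) as [LX [LY LZ]]. destruct scaled_minor_limits as [L1 [L2 L3]].
  assert (Hq : taylor_minor m2 m3 <> 0) by (apply Rgt_not_eq, taylor_minor_pos; lia).
  eapply tends0_eq; [apply tends0_mult; [apply tends0_abs | apply tends0_const]|].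
  - unfold lam. apply tends0_mult; [apply tends0_mult; [apply tends0_const | apply tends0_pow; lia]|].
    apply tends0_plus; [apply tends0_plus; [exact LX|]|];
      (apply tends0_div; [apply tends0_mult; eassumption | exact L1 | exact Hq]).
  - rewrite Rmult_0_r, Rmult_0_l, Rabs_R0. ring.
Qed.

Lemma tet_v2_offset_vanishes :
  tends0 (fun h => N1 (vsub (tet_v2 c t0 (t0 + h)) (pt c (t0 + h)))) 0.
Proof.
  destruct eventually_nondegenerate as [d [Hd0 [Hd1 Hnd]]].
  apply (tends0_ext_loc
           (fun h => Rabs (h * scaled Z m3 0 h / scaled Z m3 1 h) * N1 (Defs.d1 c (t0 + h)))).
  { exists d; split; auto. intros h Hh. destruct (Hnd h Hh) as [_ HZ].
    rewrite tet_v2_offset, N1_scale, Rabs_Ropp by (try split; auto; lra). reflexivity. }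
  destruct (coord_limits 0) as [_ [_ LZ0]]. destruct (coord_limits 1) as [_ [_ LZ1]].
  assert (Hq : taylor_coef m3 1 <> 0) by (apply Rgt_not_eq, taylor_coef_1_pos; lia).
  eapply tends0_eq; [apply tends0_mult; [apply tends0_abs | apply tends0_N1]|].
  - apply tends0_div; [apply tends0_mult; [apply tends0_id | exact LZ0] | exact LZ1 | exact Hq].
  - exact (proj1 (jet_cont c t0 t1 1 t0 Hd ltac:(lra))).
  - unfold Rdiv. rewrite !Rmult_0_l, Rabs_R0. ring.
Qed.

End Adapted_frame.

(** The three edges are controlled by the two vertex offsets and by the chord
    [r(t) - r(t0)]. *)
Lemma edges_vanish_of_offsets c t0 t1 : t0 < t1 -> dens_ok c t0 t1 ->
  tends0 (fun h => N1 (vsub (tet_v1 c t0 (t0 + h)) (pt c t0))) 0 ->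
  tends0 (fun h => N1 (vsub (tet_v2 c t0 (t0 + h)) (pt c (t0 + h)))) 0 ->
  forall eps, 0 < eps -> exists delta, 0 < delta /\
    forall t, t0 < t < t0 + delta -> t <= t1 ->
      vdist (tet_v0 c t0 t) (tet_v1 c t0 t) < eps /\
      vdist (tet_v1 c t0 t) (tet_v2 c t0 t) < eps /\
      vdist (tet_v2 c t0 t) (tet_v3 c t0 t) < eps.
Proof.
  intros Ht Hd H1 H2 eps He.
  assert (H0 : tends0 (fun h => N1 (vsub (pt c (t0 + h)) (pt c t0))) 0).
  { eapply tends0_eq; [apply tends0_N1, (jet_cont c t0 t1 0 t0 Hd); lra|].
    rewrite jet0_base. unfold N1, vzero, vx, vy, vz; simpl. rewrite Rabs_R0. ring. }
  rewrite tends0_def in H0, H1, H2.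
  destruct (H0 (eps / 3) ltac:(lra)) as [d0 [Hd0 K0]].
  destruct (H1 (eps / 3) ltac:(lra)) as [d1 [Hd1 K1]].
  destruct (H2 (eps / 3) ltac:(lra)) as [d2 [Hd2 K2]].
  exists (Rmin d0 (Rmin d1 d2)). split; [repeat apply Rmin_pos; auto|].
  intros t Ht1 Ht2. pose proof (Rmin_l d0 (Rmin d1 d2)); pose proof (Rmin_r d0 (Rmin d1 d2));
    pose proof (Rmin_l d1 d2); pose proof (Rmin_r d1 d2).
  replace t with (t0 + (t - t0)) by ring. set (h := t - t0).
  specialize (K0 h ltac:(unfold h; lra)); specialize (K1 h ltac:(unfold h; lra));
    specialize (K2 h ltac:(unfold h; lra)).
  rewrite Rminus_0_r in K0, K1, K2. apply Rabs_def2 in K0, K1, K2.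
  unfold vdist, tet_v0, tet_v3. repeat split; eapply Rle_lt_trans; try apply vnorm_le_N1.
  - rewrite N1_vsub_sym. lra.
  - replace (vsub (tet_v1 c t0 (t0 + h)) (tet_v2 c t0 (t0 + h))) with
      (vsub (vsub (vsub (tet_v1 c t0 (t0 + h)) (pt c t0)) (vsub (pt c (t0 + h)) (pt c t0)))
            (vsub (tet_v2 c t0 (t0 + h)) (pt c (t0 + h)))) by (vd; f_equal; [f_equal|]; ring).
    eapply Rle_lt_trans; [apply N1_triang3|]. lra.
  - lra.
Qed.

Lemma tetrahedron_edges_vanish c t0 t1 : t0 < t1 -> dens_ok c t0 t1 ->
  (forall t, t0 < t <= t1 -> Defs.d1 c t <> vzero /\ cross (Defs.d1 c t) (Defs.d2 c t) <> vzero) ->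
  (forall t, t0 < t < t1 -> det3 (Defs.d1 c t) (Defs.d2 c t) (Defs.d3 c t) <> 0) ->
  forall eps, 0 < eps -> exists delta, 0 < delta /\
    forall t, t0 < t < t0 + delta -> t <= t1 ->
      vdist (tet_v0 c t0 t) (tet_v1 c t0 t) < eps /\
      vdist (tet_v1 c t0 t) (tet_v2 c t0 t) < eps /\
      vdist (tet_v2 c t0 t) (tet_v3 c t0 t) < eps.
Proof.
  intros Ht Hd Hreg Htor.
  destruct (adapted_orders_exist c t0 t1 Ht Hd Htor)
    as (m1 & m2 & m3 & Hm1 & H12 & H23 & Hlow1 & Hne1 & Hlow2 & Hne2 & Hlow3 & Hne3).
  apply (edges_vanish_of_offsets c t0 t1 Ht Hd).
  - eapply tet_v1_offset_vanishes; eauto.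
  - eapply tet_v2_offset_vanishes; eauto.
Qed.

Theorem lemma6 (I : R -> Prop) (c : rcurve) (t0 t1 : R) :
  is_interval I -> I t0 -> I t1 ->
  denoms_nonzero c I -> proper_param c I -> ~ contained_in_plane c I ->
  admissible c I t0 t1 ->
  forall eps, 0 < eps -> exists delta, 0 < delta /\
    forall t, t0 < t < t0 + delta -> t <= t1 ->
      vdist (tet_v0 c t0 t) (tet_v1 c t0 t) < eps /\
      vdist (tet_v1 c t0 t) (tet_v2 c t0 t) < eps /\
      vdist (tet_v2 c t0 t) (tet_v3 c t0 t) < eps.
Proof.
  intros HI H0 H1 Hden _ _ [Hlt [Hnc _]].
  apply tetrahedron_edges_vanish; auto.
  - (* the denominators do not vanish on [t0, t1], which lies in I *)
    intros t Ht. apply Hden, (HI t0 t t1); auto.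
  - (* no singular point: r' <> 0; no inflection: r' x r'' <> 0 *)
    intros t Ht. split; intro E; apply (Hnc t Ht).
    + left. right. exact E.
    + right. left. unfold inflection, curvature. rewrite E.
      unfold vnorm, dot, vzero, vx, vy, vz; simpl.
      replace (0 * 0 + 0 * 0 + 0 * 0) with 0 by ring. rewrite sqrt_0. unfold Rdiv; ring.
  -
    intros t Ht E. apply (Hnc t ltac:(lra)). right; right. exact E.
Qed.
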